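(* Any pairwise trivially balanced lobster has a complete $\alpha$-labeling.
   Context: For a graph $G=(V,E)$ with $m$ edges, an $\alpha$-labeling with critical number $k$ is an injective $f:V\to\{0,\ldots,m\}$ with distinct edge labels $|f(u)-f(v)|$ such that every edge $uv$ satisfies $f(u)\le k<f(v)$ or $f(v)\le k<f(u)$; it is complete if $f$ is bijective. A lobster is a tree whose base (delete all degree-one vertices) is a caterpillar (a tree whose base is a path). A lobster $L$ is described by a spine, a path $(v_1,\ldots,v_r)$, and lobes $F_i$ at $v_i$ (pairwise vertex-disjoint trees meeting the spine only in $v_i$, $L$ the union of spine and lobes), each lobe $F_i$ consisting of $v_i$, vertices adjacent to $v_i$, and further leaves attached to those vertices; a neighbour of $v_i$ in $F_i$ with no further leaves is a pendant vertex at $v_i$, and a neighbour $u$ of $v_i$ together with its $\ge1$ further leaves is a non-pendant branch. $L$ is pairwise trivially balanced if $r$ is even and, for each odd $i\in\{1,\ldots,r-1\}$, there are integers $q_i\ge 0$ and $t_i\ge1$ such that each of $F_i$ and $F_{i+1}$ has exactly $q_i$ non-pendant branches, each consisting of a neighbour of the spinal vertex together with exactly $t_i$ further leaves (the numbers of pendant vertices at $v_i$ and $v_{i+1}$ being arbitrary). *)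

From mathcomp Require Import all_boot.
Set Implicit Arguments. Unset Strict Implicit. Unset Printing Implicit Defensive.

Definition simple_graph (V : finType) (e : rel V) : Prop :=
  symmetric e /\ irreflexive e.

Definition edges (V : finType) (e : rel V) : {set {set V}} :=
  [set [set p.1; p.2] | p in [set p : V * V | e p.1 p.2]].

Definition nedges (V : finType) (e : rel V) : nat := #|edges e|.

Definition absdiff (a b : nat) : nat := (a - b) + (b - a).

Definition alpha_labeling (V : finType) (e : rel V) (f : V -> nat) (k : nat)
  : Prop :=
  injective f /\
  (forall x, f x <= nedges e) /\
  (forall x y x' y', e x y -> e x' y' ->
     absdiff (f x) (f y) = absdiff (f x') (f y') ->
     [set x; y] = [set x'; y']) /\
  (forall x y, e x y -> (f x <= k < f y) \/ (f y <= k < f x)).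

Definition complete_alpha_labeling (V : finType) (e : rel V) (f : V -> nat)
  (k : nat) : Prop :=
  alpha_labeling e f k /\ (forall n, n <= nedges e -> exists x, f x = n).

Definition has_complete_alpha_labeling (V : finType) (e : rel V) : Prop :=
  exists (f : V -> nat) (k : nat), complete_alpha_labeling e f k.

(* A lobster description of (V,e), with spine (v 0, ..., v (r-1)) (0-based
   indices) and lobes F_0, ..., F_(r-1):
   - lobe x  : index i of the lobe F_i containing x (lobes partition V);
   - level x : 0 for the spinal vertex v i, 1 for a neighbour of v i in F_i,
               2 for a further leaf attached to a level-1 vertex;
   - par x   : for level x > 0, the vertex of F_i that x hangs from. *)
Definition lobster_description (V : finType) (e : rel V) (r : nat)
  (v : nat -> V) (lobe : V -> nat) (level : V -> nat) (par : V -> V) : Prop :=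
  0 < r /\
  [/\ (forall i j, i < r -> j < r -> v i = v j -> i = j),
      (forall i, i < r -> lobe (v i) = i /\ level (v i) = 0),
      (forall x, [/\ lobe x < r, (level x <= 2) &
                     (level x = 0 -> x = v (lobe x))]),
      (forall x, 0 < level x ->
                 level (par x) = (level x).-1 /\ lobe (par x) = lobe x) &
      (forall x y, e x y <->
         [\/ (exists2 i, i.+1 < r & [set x; y] = [set v i; v i.+1]),
             0 < level x /\ par x = y |
             0 < level y /\ par y = x])].

Definition nchildren (V : finType) (level : V -> nat) (par : V -> V) (x : V)
  : nat := #|[set y | (level y == 2) && (par y == x)]|.

(* pairwise trivially balanced: r even and for each pair of lobes
   (F_i, F_(i+1)) with i even (0-based; odd in the paper's 1-based indexing)
   there are q >= 0 and t >= 1 such that each of F_i, F_(i+1) has exactly q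
   non-pendant branches (level-1 vertices with >= 1 further leaf), each
   having exactly t further leaves. *)
Definition pairwise_trivially_balanced (V : finType) (r : nat)
  (lobe : V -> nat) (level : V -> nat) (par : V -> V) : Prop :=
  ~~ odd r /\
  forall i, i.+1 < r -> ~~ odd i ->
    exists q t, 1 <= t /\
      forall j, (j = i \/ j = i.+1) ->
        #|[set x | [&& lobe x == j, level x == 1 & 0 < nchildren level par x]]|
          = q /\
        (forall x, lobe x = j -> level x = 1 -> 0 < nchildren level par x ->
                   nchildren level par x = t).

Definition pairwise_trivially_balanced_lobster (V : finType) (e : rel V)
  : Prop :=
  simple_graph e /\
  exists r v lobe level par,
    lobster_description e r v lobe level par /\
    pairwise_trivially_balanced r lobe level par.

From mathcomp Require Import all_boot zify.
Set Implicit Arguments. Unset Strict Implicit. Unset Printing Implicit Defensive.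

(** Colour the vertices by the parity of lobe index plus level; every edge
    joins the even and the odd colour class.  Group the lobes in consecutive
    pairs (F_2s, F_2s+1), the blocks: both lobes of a block have the same
    number q of branches, each carrying t leaves.  Inside a block each colour
    class is numbered from 0 by a fixed layout, and the blocks are stacked by
    prefix sums; this gives labels h mapping the even class onto [0, N_even)
    and the odd class onto [0, N_odd) bijectively.  With M = N_even + N_odd - 1,
    set f = h on the even class and f = M - h on the odd class.  The edge from
    a vertex x to its parent then gets the label M - (h x + h (parent x)), and
    the layout is chosen so that the sums h x + h (parent x) coming from one
    block fill an interval without repetition.  As the edges are the |V| - 1 = M
    pairs {x, parent x}, f is a complete alpha-labeling with critical number
    N_even - 1. *)

Lemma edivn_pair (T Q R : nat) : R < T -> (Q * T + R) %/ T = Q /\ (Q * T + R) %% T = R.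
Proof. by move=> lt_RT; rewrite divnMDl ?modnMDl ?divn_small ?modn_small ?addn0 //; lia. Qed.

Lemma ltn_mulD_pair (i q T r : nat) : i < q -> r < T -> i * T + r < q * T.
Proof.
move=> lt_iq lt_rT; apply: leq_trans (leq_mul lt_iq (leqnn T)).
by rewrite mulSn addnC ltn_add2r.
Qed.

Definition prefix_sum (F : nat -> nat) (s : nat) : nat := \sum_(i < s) F i.

Lemma prefix_sum0 F : prefix_sum F 0 = 0.
Proof. by rewrite /prefix_sum big_ord0. Qed.

Lemma prefix_sumS F s : prefix_sum F s.+1 = prefix_sum F s + F s.
Proof. by rewrite /prefix_sum big_ord_recr. Qed.

Lemma prefix_sumD F G s :
  prefix_sum F s + prefix_sum G s = prefix_sum (fun i => F i + G i) s.
Proof. by rewrite /prefix_sum big_split. Qed.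

Lemma leq_prefix_sum F : {homo prefix_sum F : a b / a <= b}.
Proof. by apply: homo_leq => [//|a b c|s]; [exact: leq_trans | rewrite prefix_sumS leq_addr]. Qed.

Lemma prefix_sum_interval_uniq F s s' n :
  prefix_sum F s <= n < prefix_sum F s.+1 ->
  prefix_sum F s' <= n < prefix_sum F s'.+1 -> s = s'.
Proof.
move=> /andP[ge_s lt_s] /andP[ge_s' lt_s'].
by case: (ltngtP s s') => // lt; have := leq_prefix_sum F lt; lia.
Qed.

Lemma prefix_sum_interval F N n : n < prefix_sum F N ->
  exists2 s, s < N & prefix_sum F s <= n < prefix_sum F s.+1.
Proof.
elim: N => [|N IHN]; first by rewrite prefix_sum0.
case: (ltnP n (prefix_sum F N)) => [/IHN [s lt_sN Hs] _ | ge_n lt_n].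
  by exists s => //; exact: ltnW.
by exists N; rewrite ?ge_n.
Qed.

Section RankInSet.
Variable T : finType.

Definition rank_in (S : {set T}) (x : T) : nat := index x (enum S).

Lemma rank_in_lt (S : {set T}) x : x \in S -> rank_in S x < #|S|.
Proof. by move=> xS; rewrite cardE index_mem mem_enum. Qed.

Lemma rank_in_inj (S : {set T}) x y : x \in S -> y \in S -> rank_in S x = rank_in S y -> x = y.
Proof.
rewrite /rank_in -!(mem_enum S) => xS yS E.
by rewrite -(nth_index x xS) E nth_index.
Qed.

Lemma rank_in_surj (S : {set T}) n : n < #|S| -> exists2 x, x \in S & rank_in S x = n.
Proof.
move=> lt_n; set x := enum_val (Ordinal lt_n); exists x; first exact: enum_valP.
by rewrite /rank_in /x (enum_val_nth x) index_uniq ?enum_uniq -?cardE.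
Qed.

End RankInSet.

Lemma eq_set2 (T : finType) (x y a b : T) : a != b ->
  [set x; y] = [set a; b] -> (x = a /\ y = b) \/ (x = b /\ y = a).
Proof.
move=> a_neq_b E.
have /set2P a_xy : a \in [set x; y] by rewrite E set21.
have /set2P b_xy : b \in [set x; y] by rewrite E set22.
move: a_neq_b; case: a_xy => ->; case: b_xy => ->; rewrite ?eqxx //; by [left | right].
Qed.

(** * The layout of a block *)

(* A block consists of two lobes F, F' with spinal vertices w, w'; [pendants0]
   and [pendants1] count the pendant vertices of F and F', and both lobes have
   [branches] non-pendant branches with [leaves] leaves each. *)
Record block_shape := BlockShape {
  pendants0 : nat; pendants1 : nat; branches : nat; leaves : nat }.

Definition branch_size (B : block_shape) : nat := (leaves B).+1.

(* Positions in a block: the suffix 0 refers to F and 1 to F'; [Branch0 i] is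
   the i-th branch of F and [Leaf0 i l] the l-th leaf hanging from it. *)
Inductive slot : Type :=
  | Spine0 | Spine1 | Pend0 of nat | Pend1 of nat
  | Branch0 of nat | Branch1 of nat | Leaf0 of nat & nat | Leaf1 of nat & nat.

Definition slot_level (c : slot) : nat :=
  match c with Spine0 | Spine1 => 0 | Leaf0 _ _ | Leaf1 _ _ => 2 | _ => 1 end.

Definition slot_odd (c : slot) : bool :=
  match c with Spine1 | Pend1 _ | Branch1 _ | Leaf1 _ _ => true | _ => false end.

Definition slot_side (c : slot) : bool :=
  match c with Spine0 | Leaf0 _ _ | Branch1 _ | Pend1 _ => true | _ => false end.

Lemma slot_sideE c : slot_side c = ~~ odd (slot_level c + slot_odd c).
Proof. by case: c. Qed.

Definition slot_valid (B : block_shape) (c : slot) : bool :=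
  match c with
  | Spine0 | Spine1 => true
  | Pend0 p => p < pendants0 B
  | Pend1 p => p < pendants1 B
  | Branch0 i | Branch1 i => i < branches B
  | Leaf0 i l | Leaf1 i l => (i < branches B) && (l < leaves B)
  end.

Definition side_size (B : block_shape) (side : bool) : nat :=
  if side then (branches B * branch_size B).+1 + pendants1 B
  else pendants0 B + (branches B * branch_size B).+1.

(* The
   leaves of the i-th branch of F come right before the i-th branch of F', and
   those of the i-th branch of F' right after the i-th branch of F: this
   interleaving is what makes the edge sums of a block pairwise distinct. *)
Definition slot_label (B : block_shape) (c : slot) : nat :=
  let P := pendants0 B in let T := branch_size B in
  match c with
  | Spine0 => 0
  | Leaf0 i l => (i * T + l).+1
  | Branch1 i => i.+1 * T
  | Pend1 p => (branches B * T).+1 + p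
  | Pend0 p => p
  | Branch0 i => P + i * T
  | Leaf1 i l => P + (i * T + l).+1
  | Spine1 => P + branches B * T
  end.

Lemma slot_label_lt B c :
  slot_valid B c -> slot_label B c < side_size B (slot_side c).
Proof.
rewrite /slot_label /side_size /branch_size; set T := (leaves B).+1.
case: c => [||p|p|i|i|i l|i l] valid_c;
  cbn [slot_side slot_valid] in valid_c |- *; try lia.
all: try case/andP: valid_c => valid_c lt_l.
all: have := leq_mul valid_c (leqnn T); rewrite mulSn; lia.
Qed.

Definition slot_decode (B : block_shape) (side : bool) (n : nat) : slot :=
  let P := pendants0 B in let T := branch_size B in let qT := branches B * T in
  if side then
    if n == 0 then Spine0
    else if n <= qT then
      if n.-1 %% T < leaves B then Leaf0 (n.-1 %/ T) (n.-1 %% T)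
      else Branch1 (n.-1 %/ T)
    else Pend1 (n - qT.+1)
  else
    if n < P then Pend0 n
    else if n - P < qT then
      if (n - P) %% T == 0 then Branch0 ((n - P) %/ T)
      else Leaf1 ((n - P) %/ T) ((n - P) %% T).-1
    else Spine1.

Lemma slot_decodeK B c :
  slot_valid B c -> slot_decode B (slot_side c) (slot_label B c) = c.
Proof.
rewrite /slot_decode /slot_label /branch_size.
set T := (leaves B).+1; set q := branches B; set P := pendants0 B.
case: c => [||p|p|i|i|i l|i l] valid_c;
  cbn [slot_side slot_valid] in valid_c |- *.
- by [].
- by rewrite ifF ?ifF //; lia.
- by rewrite valid_c.
- by rewrite ifF; [congr Pend1 |]; lia.
- rewrite ifF ?addKn; last lia.
  rewrite -[i * T]addn0 ifT; last exact: ltn_mulD_pair.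
  by have [-> ->] := @edivn_pair T i 0 isT.
- rewrite ifT; last exact: leq_mul valid_c (leqnn T).
  have -> : (i.+1 * T).-1 = i * T + leaves B by rewrite mulSn /T; lia.
  by have [-> ->] := @edivn_pair T i (leaves B) (ltnSn _); rewrite ltnn.
- case/andP: valid_c => lt_iq lt_l.
  have lt_lT : l < T by rewrite ltnS ltnW.
  rewrite ifT /=; last exact: ltn_mulD_pair lt_iq lt_lT.
  by have [-> ->] := @edivn_pair T i l lt_lT; rewrite lt_l.
- case/andP: valid_c => lt_iq lt_l.
  rewrite ifF; last lia.
  rewrite (_ : P + (i * T + l).+1 - P = i * T + l.+1); last lia.
  have lt_lT : l.+1 < T by rewrite ltnS.
  have [-> ->] := @edivn_pair T i l.+1 lt_lT.
  by rewrite ifT; last exact: ltn_mulD_pair lt_iq lt_lT.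
Qed.

Lemma slot_decodeP B side n : n < side_size B side ->
  let c := slot_decode B side n in
  [/\ slot_side c = side, slot_valid B c & slot_label B c = n].
Proof.
rewrite /side_size /slot_decode /slot_label /branch_size.
set T := (leaves B).+1; set q := branches B; set P := pendants0 B.
have T_gt0 : 0 < T by [].
case: side => lt_n.
- case: eqP => [-> // | n_ne0].
  case: (leqP n (q * T)) => [le_nqT | lt_qTn]; last by split=> //=; lia.
  have lt_Qq : n.-1 %/ T < q by rewrite ltn_divLR //; lia.
  have := divn_eq n.-1 T; have := ltn_pmod n.-1 T_gt0.
  case: (ltnP (n.-1 %% T) (leaves B)) => [lt_Rl | ge_Rl] /= lt_RT n_eq;
    rewrite ?lt_Qq ?lt_Rl; split=> //; rewrite ?mulSn; lia.
- case: (ltnP n P) => [lt_nP | ge_nP]; first by [].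
  case: (ltnP (n - P) (q * T)) => [lt_mqT | ge_mqT]; last by split=> //=; lia.
  have lt_Qq : (n - P) %/ T < q by rewrite ltn_divLR.
  have := divn_eq (n - P) T; have := ltn_pmod (n - P) T_gt0.
  by case: eqP => [R0 | R_ne0] /= lt_RT m_eq; rewrite ?lt_Qq; split=> //=; lia.
Qed.

Definition is_spine0 (c : slot) : bool := if c is Spine0 then true else false.

(* The parent of w is the vertex w' of the previous block. *)
Definition parent_slot (c : slot) : slot :=
  match c with
  | Spine0 => Spine1 | Spine1 => Spine0
  | Pend0 _ | Branch0 _ => Spine0 | Pend1 _ | Branch1 _ => Spine1
  | Leaf0 i _ => Branch0 i | Leaf1 i _ => Branch1 i
  end.

Lemma parent_slot_side c : slot_side (parent_slot c) = ~~ slot_side c.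
Proof. by case: c. Qed.

(* The label sum of the edge between a vertex in slot c and its parent, counted
   from the offsets of the parent's block: for c = Spine0 the child lies in the
   next block, whose even offset is larger by [side_size B true]. *)
Definition edge_label (B : block_shape) (c : slot) : nat :=
  (if c is Spine0 then side_size B true else 0)
  + slot_label B c + slot_label B (parent_slot c).

Lemma edge_label_lt B c :
  slot_valid B c -> edge_label B c < side_size B true + side_size B false.
Proof.
rewrite /edge_label /side_size /slot_label /branch_size; set T := (leaves B).+1.
case: c => [||p|p|i|i|i l|i l] valid_c;
  cbn [slot_valid parent_slot] in valid_c |- *; rewrite ?add0n; try lia.
all: try case/andP: valid_c => valid_c lt_l.
all: have := leq_mul valid_c (leqnn T); rewrite mulSn; lia.
Qed.

(* Write an edge sum as P + Q * T + R with T = t + 1: R = 0 for the edges at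
   spinal vertices and R > 0 for the leaf edges, the parity of Q telling the
   lobe. *)
Definition edge_decode (B : block_shape) (n : nat) : slot :=
  let P := pendants0 B in let T := branch_size B in
  let q := branches B in let m := n - P in
  if n < P then Pend0 n
  else if m <= (q * T).*2 then
    if m %% T == 0 then
      if m %/ T < q then Branch0 (m %/ T)
      else if m %/ T == q then Spine1
      else Branch1 (m %/ T - q.+1)
    else if odd (m %/ T) then Leaf1 (m %/ T)./2 (m %% T).-1
    else Leaf0 (m %/ T)./2 (m %% T).-1
  else if m - (q * T).*2.+1 < pendants1 B then Pend1 (m - (q * T).*2.+1)
  else Spine0.

Lemma edge_decode_leaf B (b : bool) i l : i < branches B -> l < leaves B ->
  edge_decode B (pendants0 B + ((i.*2 + b) * branch_size B + l.+1)) =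
  (if b then Leaf1 else Leaf0) i l.
Proof.
rewrite /edge_decode /branch_size; set T := (leaves B).+1.
move=> lt_iq lt_l; have lt_lT : l.+1 < T by rewrite ltnS.
rewrite ifF ?addKn; last lia.
have [-> ->] := @edivn_pair T (i.*2 + b) l.+1 lt_lT.
rewrite ifT; first by rewrite oddD odd_double oddb addnC half_bit_double; case: b.
rewrite doubleMl ltnW // ltn_mulD_pair //; case: b; rewrite ?addn0 ?addn1; lia.
Qed.

Lemma edge_decodeK B c : slot_valid B c -> edge_decode B (edge_label B c) = c.
Proof.
case: c => [||p|p|i|i|i l|i l] valid_c; cbn [slot_valid] in valid_c.
7: case/andP: valid_c => lt_iq lt_l; rewrite -[RHS](edge_decode_leaf false lt_iq lt_l).
8: case/andP: valid_c => lt_iq lt_l; rewrite -[RHS](edge_decode_leaf true lt_iq lt_l).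
7,8: rewrite /edge_label /slot_label /=; congr edge_decode.
7,8: by rewrite ?addn0 ?addn1 ?mulSn -?doubleMl; lia.
all: rewrite /edge_decode /edge_label /side_size /slot_label /branch_size.
all: set T := (leaves B).+1; set q := branches B; set P := pendants0 B.
all: cbn [parent_slot]; rewrite ?add0n.
- rewrite ifF; last lia.
  by rewrite ifF ?ifF //; lia.
- rewrite ifF; last lia.
  rewrite ifT; last lia.
  rewrite (_ : P + q * T + 0 - P = q * T + 0); last lia.
  have [-> ->] := @edivn_pair T q 0 isT.
  by rewrite eqxx ltnn eqxx.
- by rewrite addn0 valid_c.
- rewrite ifF; last lia.
  by rewrite ifF ?ifT; [congr Pend1 | |]; lia.
- have le_iTqT := leq_mul (ltnW valid_c) (leqnn T).
  rewrite ifF; last lia.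
  rewrite (_ : P + i * T + 0 - P = i * T + 0); last lia.
  have [-> ->] := @edivn_pair T i 0 isT.
  by rewrite ifT ?eqxx ?valid_c //; lia.
- have le_iTqT := leq_mul (valid_c : i.+1 <= q) (leqnn T).
  rewrite ifF; last lia.
  rewrite (_ : i.+1 * T + (P + q * T) - P = (q + i.+1) * T + 0); last by rewrite mulnDl; lia.
  have [-> ->] := @edivn_pair T (q + i.+1) 0 isT.
  rewrite eqxx ifT; last by rewrite mulnDl; lia.
  by rewrite ifF ?ifF; [congr Branch1 | |]; lia.
Qed.

(** * The labeling of a pairwise trivially balanced lobster *)

Section PairwiseTriviallyBalancedLobster.

Variables (V : finType) (e : rel V) (r : nat) (v : nat -> V).
Variables (lobe level : V -> nat) (par : V -> V).

Local Notation nch := (nchildren level par).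

Definition children (u : V) : {set V} := [set y | (level y == 2) && (par y == u)].
Definition branch_set (j : nat) : {set V} :=
  [set x | [&& lobe x == j, level x == 1 & 0 < nch x]].
Definition pendant_set (j : nat) : {set V} :=
  [set x | [&& lobe x == j, level x == 1 & nch x == 0]].

Lemma card_children u : #|children u| = nch u.
Proof. by []. Qed.

Hypothesis r_gt0 : 0 < r.
Hypothesis r_even : ~~ odd r.
Hypothesis spine_lobe : forall i, i < r -> lobe (v i) = i /\ level (v i) = 0.
Hypothesis vertex_shape : forall x,
  [/\ lobe x < r, level x <= 2 & (level x = 0 -> x = v (lobe x))].
Hypothesis par_shape : forall x, 0 < level x ->
  level (par x) = (level x).-1 /\ lobe (par x) = lobe x.
Hypothesis edgeP : forall x y, e x y <->
  [\/ (exists2 i, i.+1 < r & [set x; y] = [set v i; v i.+1]),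
      0 < level x /\ par x = y | 0 < level y /\ par y = x].
Hypothesis balanced : forall i, i.+1 < r -> ~~ odd i ->
  exists q t, 1 <= t /\
    forall j, (j = i \/ j = i.+1) ->
      #|branch_set j| = q /\
      (forall x, lobe x = j -> level x = 1 -> 0 < nch x -> nch x = t).

Lemma lobe_lt x : lobe x < r.
Proof. by case: (vertex_shape x). Qed.

Lemma level_le2 x : level x <= 2.
Proof. by case: (vertex_shape x). Qed.

Lemma level0_spine x : level x = 0 -> x = v (lobe x).
Proof. by case: (vertex_shape x) => _ _; apply. Qed.

Lemma double_half_succ_lt j : j < r -> (j./2).*2.+1 < r.
Proof.
move=> lt_jr; have := odd_double_half j; have := odd_double_half r.
by rewrite (negbTE r_even); lia.
Qed.

Lemma branch_setE j x : (x \in branch_set j) = [&& lobe x == j, level x == 1 & 0 < nch x].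
Proof. by rewrite inE. Qed.

Lemma pendant_setE j x : (x \in pendant_set j) = [&& lobe x == j, level x == 1 & nch x == 0].
Proof. by rewrite inE. Qed.

Lemma par_level1 x : level x = 1 -> par x = v (lobe x).
Proof.
move=> lx1; have [lp0 lobe_p] := par_shape (ltac:(by rewrite lx1) : 0 < level x).
by rewrite -lobe_p; apply: level0_spine; rewrite lp0 lx1.
Qed.

Lemma par_level2 x : level x = 2 -> par x \in branch_set (lobe x) /\ x \in children (par x).
Proof.
move=> lx2; have [lp1 lobe_p] := par_shape (ltac:(by rewrite lx2) : 0 < level x).
have x_child : x \in children (par x) by rewrite inE lx2 !eqxx.
split=> //; rewrite branch_setE lobe_p lp1 lx2 !eqxx card_gt0.
by apply/set0Pn; exists x.
Qed.

(* The maximum names the common number of leaves per branch; it is irrelevant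
   when the block has no branch. *)
Definition shape (s : nat) : block_shape :=
  BlockShape #|pendant_set s.*2| #|pendant_set s.*2.+1| #|branch_set s.*2|
             (\max_(u in branch_set s.*2) nch u).

Lemma shape_pendants j :
  (if odd j then pendants1 else pendants0) (shape j./2) = #|pendant_set j|.
Proof. by rewrite -[in RHS](odd_double_half j); case: (odd j); rewrite ?add0n ?add1n. Qed.

Lemma balanced_pair j : j < r ->
  #|branch_set j| = #|branch_set (j./2).*2| /\
  forall u, u \in branch_set j -> nch u = leaves (shape j./2).
Proof.
move=> lt_jr; have [q [t [_ pair_qt]]] := balanced (double_half_succ_lt lt_jr) (negbT (odd_double _)).
have j_pair : j = (j./2).*2 \/ j = (j./2).*2.+1.
  by have := odd_double_half j; case: (odd j) => j_eq; [right | left]; lia.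
have nch_t j' u : j' = (j./2).*2 \/ j' = (j./2).*2.+1 -> u \in branch_set j' -> nch u = t.
  by move=> /pair_qt [_ Ht]; rewrite branch_setE => /and3P[/eqP ? /eqP ? ?]; apply: Ht.
have [card_j _] := pair_qt j j_pair; have [card_even _] := pair_qt _ (or_introl erefl).
split=> [|u u_j]; first by rewrite card_j card_even.
have : 0 < #|branch_set (j./2).*2| by rewrite card_even -card_j card_gt0; apply/set0Pn; exists u.
rewrite /shape /= => /(eq_bigmax_cond nch) [w w_even ->].
by rewrite (nch_t _ _ j_pair u_j) (nch_t _ _ (or_introl erefl) w_even).
Qed.

Definition slot_of (x : V) : slot :=
  let j := lobe x in
  match level x with
  | 0 => if odd j then Spine1 else Spine0
  | 1 => if 0 < nch x
         then (if odd j then Branch1 else Branch0) (rank_in (branch_set j) x)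
         else (if odd j then Pend1 else Pend0) (rank_in (pendant_set j) x)
  | _ => (if odd j then Leaf1 else Leaf0)
           (rank_in (branch_set j) (par x)) (rank_in (children (par x)) x)
  end.

Definition block (x : V) : nat := (lobe x)./2.

Definition even_class (x : V) : bool := ~~ odd (level x + lobe x).

Lemma slot_of_level x : slot_level (slot_of x) = level x.
Proof.
rewrite /slot_of; case: (level x) (level_le2 x) => [|[|[|]]] //= _;
  by case: (odd _); case: (0 < _).
Qed.

Lemma slot_of_odd x : slot_odd (slot_of x) = odd (lobe x).
Proof.
rewrite /slot_of; case: (level x) (level_le2 x) => [|[|[|]]] //= _;
  by case: (odd _); case: (0 < _).
Qed.

Lemma slot_of_side x : slot_side (slot_of x) = even_class x.
Proof. by rewrite slot_sideE slot_of_level slot_of_odd /even_class !oddD oddb. Qed.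

Lemma slot_of_valid x : slot_valid (shape (block x)) (slot_of x).
Proof.
have [branches_x leaves_x] := balanced_pair (lobe_lt x).
rewrite /slot_of /block; case lx: (level x) (level_le2 x) => [|[|[|]]] // _.
- by case: (odd _).
- case: (posnP (nch x)) => [nch0 | nch_gt0].
    have x_pend : x \in pendant_set (lobe x) by rewrite pendant_setE lx nch0 !eqxx.
    by have := rank_in_lt x_pend; rewrite -shape_pendants; case: (odd _).
  have x_br : x \in branch_set (lobe x) by rewrite branch_setE lx nch_gt0 !eqxx.
  by have := rank_in_lt x_br; rewrite branches_x; case: (odd _).
- have [p_br x_child] := par_level2 lx.
  have := rank_in_lt p_br; rewrite branches_x => lt_p.
  have := rank_in_lt x_child; rewrite card_children (leaves_x _ p_br) => lt_x.
  by case: (odd _); rewrite /= lt_p.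
Qed.

Lemma lobe_block x : lobe x = (block x).*2 + slot_odd (slot_of x).
Proof. by rewrite slot_of_odd addnC odd_double_half. Qed.

Lemma level1_set x : level x = 1 ->
  x \in (if 0 < nch x then branch_set else pendant_set) (lobe x).
Proof. by move=> lx; case: posnP => nx; rewrite inE lx nx !eqxx. Qed.

Lemma slot_of_inj x y : block x = block y -> slot_of x = slot_of y -> x = y.
Proof.
move=> bxy sxy.
have lobe_xy : lobe x = lobe y by rewrite lobe_block (lobe_block y) bxy sxy.
have level_xy : level x = level y by rewrite -!slot_of_level sxy.
move: sxy; rewrite /slot_of -lobe_xy -level_xy.
case lx : (level x) (level_le2 x) => [|[|[|]]] // _.
- move=> _; rewrite (level0_spine lx) (level0_spine (etrans (esym level_xy) lx)).
  by rewrite lobe_xy.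
- have ly : level y = 1 by rewrite -level_xy.
  move: (level1_set lx) (level1_set ly); rewrite -lobe_xy.
  by case: (0 < nch x); case: (0 < nch y); case: (odd _) => //= mx my [] /(rank_in_inj mx my).
- have ly : level y = 2 by rewrite -level_xy.
  have [px cx] := par_level2 lx; have [py cy] := par_level2 ly.
  rewrite -lobe_xy in py.
  case: (odd _) => -[/(rank_in_inj px py) par_xy];
    rewrite -par_xy in cy *; exact: rank_in_inj.
Qed.

Lemma slot_of_surj j c : j < r -> slot_odd c = odd j -> slot_valid (shape j./2) c ->
  exists2 x, lobe x = j & slot_of x = c.
Proof.
move=> lt_jr odd_c; have [card_br leaves_br] := balanced_pair lt_jr.
have [lobe_vj level_vj] := spine_lobe lt_jr.
have card_pend := shape_pendants j.
case: c odd_c => [||p|p|i|i|i l|i l] /= odd_c valid_c;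
  rewrite -odd_c /= in card_pend.
1,2: by exists (v j); rewrite // /slot_of level_vj lobe_vj -odd_c.
1,2: rewrite card_pend in valid_c; have [x] := rank_in_surj valid_c;
     rewrite pendant_setE => /and3P[/eqP lx /eqP levx /eqP nx] rank_x;
     by exists x; rewrite // /slot_of levx lx nx -odd_c rank_x.
1,2: rewrite -card_br in valid_c; have [x] := rank_in_surj valid_c;
     rewrite branch_setE => /and3P[/eqP lx /eqP levx nx] rank_x;
     by exists x; rewrite // /slot_of levx lx nx -odd_c rank_x.
all: case/andP: valid_c; rewrite -card_br => lt_i lt_l.
all: have [u u_br rank_u] := rank_in_surj lt_i.
all: have [x x_child rank_x] : exists2 x, x \in children u & rank_in (children u) x = l
       by apply: rank_in_surj; rewrite card_children (leaves_br u u_br).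
all: move: x_child; rewrite inE => /andP[/eqP levx /eqP px].
all: have [_ lobe_px] := par_shape (ltac:(by rewrite levx) : 0 < level x).
all: have lobe_x : lobe x = j
       by rewrite -lobe_px px; move: u_br; rewrite branch_setE => /and3P[/eqP].
all: by exists x; rewrite // /slot_of levx lobe_x -odd_c px rank_u rank_x.
Qed.

Definition nblocks : nat := r./2.

Definition offset (side : bool) : nat -> nat :=
  prefix_sum (fun s => side_size (shape s) side).

Definition class_size (side : bool) : nat := offset side nblocks.

Definition label (x : V) : nat :=
  offset (even_class x) (block x) + slot_label (shape (block x)) (slot_of x).

Lemma block_lt x : block x < nblocks.
Proof.
have := double_half_succ_lt (lobe_lt x); have := odd_double_half r; have := odd_double_half (lobe x).
by rewrite /block /nblocks (negbTE r_even); lia.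
Qed.

Lemma label_interval x :
  offset (even_class x) (block x) <= label x < offset (even_class x) (block x).+1.
Proof.
rewrite /label /offset prefix_sumS leq_addr /= ltn_add2l -slot_of_side.
exact: slot_label_lt (slot_of_valid x).
Qed.

Lemma label_lt x : label x < class_size (even_class x).
Proof.
have /andP[_ lt_label] := label_interval x.
exact: leq_trans lt_label (leq_prefix_sum _ (block_lt x)).
Qed.

Lemma label_inj x y : even_class x = even_class y -> label x = label y -> x = y.
Proof.
move=> side_xy label_xy.
have bxy : block x = block y.
  apply: prefix_sum_interval_uniq (label_interval x) _.
  by rewrite side_xy label_xy; exact: label_interval.
have local_xy : slot_label (shape (block x)) (slot_of x) = slot_label (shape (block y)) (slot_of y).
  by move: label_xy; rewrite /label side_xy bxy => /addnI.
apply: (slot_of_inj bxy).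
rewrite -[LHS](slot_decodeK (slot_of_valid x)) local_xy slot_of_side side_xy bxy -slot_of_side.
exact: slot_decodeK (slot_of_valid y).
Qed.

Lemma label_surj side n : n < class_size side -> exists2 x, even_class x = side & label x = n.
Proof.
move=> /prefix_sum_interval [s lt_s /andP[ge_n lt_n]].
have [side_c valid_c label_c] := @slot_decodeP (shape s) side (n - offset side s)
  (ltac:(by move: lt_n; rewrite /offset prefix_sumS; lia)).
set c := slot_decode _ _ _ in side_c valid_c label_c.
have lt_jr : s.*2 + slot_odd c < r.
  by have := odd_double_half r; rewrite (negbTE r_even) /nblocks in lt_s *; case: (slot_odd c); lia.
have odd_c : slot_odd c = odd (s.*2 + slot_odd c) by rewrite oddD odd_double oddb.
have [x lobe_x slot_x] := slot_of_surj lt_jr odd_c (ltac:(by rewrite addnC half_bit_double)).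
have block_x : block x = s by rewrite /block lobe_x addnC half_bit_double.
exists x; first by rewrite -slot_of_side slot_x.
by rewrite /label -slot_of_side slot_x side_c block_x label_c; move: ge_n; rewrite /offset; lia.
Qed.

(* The parent in the tree rooted at v 0, where v j hangs from v (j - 1); the
   value at the root itself is junk. *)
Definition parent (x : V) : V := if 0 < level x then par x else v (lobe x).-1.

Lemma spine_slot j : j < r -> slot_of (v j) = if odd j then Spine1 else Spine0.
Proof. by move=> /spine_lobe[lobe_vj level_vj]; rewrite /slot_of level_vj lobe_vj. Qed.

Lemma spine_parent x : level x = 0 -> x != v 0 ->
  [/\ 0 < lobe x, x = v (lobe x) & parent x = v (lobe x).-1].
Proof.
move=> lx x_nroot; have x_spine := level0_spine lx.
have lobe_gt0 : 0 < lobe x by rewrite lt0n; apply: contraNneq x_nroot => lobe0; rewrite x_spine lobe0.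
by rewrite /parent lx.
Qed.

Lemma slot_of_parent x : x != v 0 -> slot_of (parent x) = parent_slot (slot_of x).
Proof.
move=> x_nroot; case lx: (level x) (level_le2 x) => [|[|[|]]] // _.
- have [lobe_gt0 x_spine ->] := spine_parent lx x_nroot.
  have lt_jr := lobe_lt x.
  rewrite {2}x_spine !spine_slot ?(leq_ltn_trans (leq_pred _) lt_jr) //.
  by move: lobe_gt0; case: (lobe x) => // j _; rewrite oddS /=; case: (odd j).
- rewrite /parent lx par_level1 // spine_slot ?lobe_lt // /slot_of lx.
  by case: (odd _); case: (0 < _).
- have [p_br _] := par_level2 lx; move: (p_br); rewrite branch_setE => /and3P[/eqP lobe_p /eqP lp nch_p].
  by rewrite /parent lx /slot_of lx lp lobe_p nch_p; case: (odd _).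
Qed.

Lemma block_parent x : x != v 0 -> block x = block (parent x) + is_spine0 (slot_of x).
Proof.
move=> x_nroot; case lx: (level x) => [|n].
- have [lobe_gt0 x_spine ->] := spine_parent lx x_nroot.
  have lt_jr := lobe_lt x.
  rewrite /block {3}x_spine spine_slot // (proj1 (spine_lobe _)) ?(leq_ltn_trans (leq_pred _) lt_jr) //.
  by move: lobe_gt0; case: (lobe x) => // j _ /=; rewrite uphalf_half addnC; case: (odd j).
- have [_ lobe_p] := par_shape (ltac:(by rewrite lx) : 0 < level x).
  have -> : is_spine0 (slot_of x) = false by move: (slot_of_level x); rewrite lx; case: (slot_of x).
  by rewrite addn0 /block /parent lx lobe_p.
Qed.

Lemma even_class_parent x : x != v 0 -> even_class (parent x) = ~~ even_class x.
Proof. by move=> x_nroot; rewrite -!slot_of_side slot_of_parent // parent_slot_side. Qed.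

Lemma parent_neq x : x != v 0 -> x != parent x.
Proof.
move=> x_nroot; apply/eqP => x_eq.
by have := even_class_parent x_nroot; rewrite -x_eq; case: (even_class x).
Qed.

Lemma slot_of_valid_parent x : x != v 0 -> slot_valid (shape (block (parent x))) (slot_of x).
Proof.
move=> x_nroot; have := slot_of_valid x; rewrite (block_parent x_nroot).
by case: (slot_of x) => [||p|p|i|i|i l|i l] //=; rewrite addn0.
Qed.

Lemma label_edge x : x != v 0 -> label x + label (parent x) =
  offset true (block (parent x)) + offset false (block (parent x))
  + edge_label (shape (block (parent x))) (slot_of x).
Proof.
move=> x_nroot; rewrite /label /edge_label.
rewrite even_class_parent // slot_of_parent // (block_parent x_nroot) -slot_of_side.
by case: (slot_of x) => [||p|p|i|i|i l|i l] /=;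
  rewrite ?addn0 ?addn1 /offset ?prefix_sumS /side_size /=; lia.
Qed.

Lemma label_edge_inj x y : x != v 0 -> y != v 0 ->
  label x + label (parent x) = label y + label (parent y) -> x = y.
Proof.
move=> x_nroot y_nroot.
have interval z : z != v 0 ->
    let edge_offset := prefix_sum (fun s => side_size (shape s) true + side_size (shape s) false) in
    edge_offset (block (parent z)) <= label z + label (parent z)
      < edge_offset (block (parent z)).+1.
  move=> z_nroot; rewrite label_edge // /offset prefix_sumD prefix_sumS leq_addr ltn_add2l.
  exact: edge_label_lt (slot_of_valid_parent z_nroot).
move=> sum_xy; have bp_xy : block (parent x) = block (parent y).
  by apply: prefix_sum_interval_uniq (interval _ x_nroot) _; rewrite sum_xy; exact: interval.
have slot_xy : slot_of x = slot_of y.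
  rewrite -(edge_decodeK (slot_of_valid_parent x_nroot)) -(edge_decodeK (slot_of_valid_parent y_nroot)).
  by move: sum_xy; rewrite !label_edge // bp_xy => /addnI ->.
apply: (slot_of_inj _ slot_xy).
by rewrite (block_parent x_nroot) (block_parent y_nroot) bp_xy slot_xy.
Qed.

Lemma spine_neq i : i.+1 < r -> v i != v i.+1.
Proof.
move=> lt_ir; apply/eqP => /(congr1 lobe).
by rewrite (proj1 (spine_lobe (ltnW lt_ir))) (proj1 (spine_lobe lt_ir)) => /n_Sn.
Qed.

Lemma parent_edge x : x != v 0 -> e x (parent x).
Proof.
move=> x_nroot; apply/edgeP; case: (posnP (level x)) => [lx | lx_gt0].
- have [lobe_gt0 x_spine ->] := spine_parent lx x_nroot.
  apply: Or31; exists (lobe x).-1; first by rewrite prednK ?lobe_lt.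
  by rewrite prednK // -x_spine setUC.
- by apply: Or32; rewrite /parent lx_gt0.
Qed.

Lemma edge_parent x y : e x y ->
  exists2 c, c != v 0 & (x = c /\ y = parent c) \/ (x = parent c /\ y = c).
Proof.
move=> /edgeP[[i lt_ir xy_eq] | [lx_gt0 <-] | [ly_gt0 <-]].
- have [lobe_vi1 level_vi1] := spine_lobe lt_ir.
  have vi1_nroot : v i.+1 != v 0.
    by apply/eqP => /(congr1 lobe); rewrite lobe_vi1 (proj1 (spine_lobe (ltn_trans _ lt_ir))).
  have parent_vi1 : parent (v i.+1) = v i by rewrite /parent level_vi1 lobe_vi1.
  by exists (v i.+1) => //; rewrite parent_vi1; case: (eq_set2 (spine_neq lt_ir) xy_eq); [right | left].
- exists x; last by left; rewrite /parent lx_gt0.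
  by apply: contraTneq lx_gt0 => ->; rewrite (proj2 (spine_lobe r_gt0)).
- exists y; last by right; rewrite /parent ly_gt0.
  by apply: contraTneq ly_gt0 => ->; rewrite (proj2 (spine_lobe r_gt0)).
Qed.

Lemma edges_parent : edges e = [set [set x; parent x] | x in [set~ v 0]].
Proof.
apply/setP => E; apply/imsetP/imsetP => [[[x y]] | [c]]; rewrite !inE /=.
- move=> /edge_parent[c c_nroot xy_eq] ->; exists c; rewrite ?inE //.
  by case: xy_eq => -[-> ->] //; rewrite setUC.
- by move=> c_nroot ->; exists (c, parent c); rewrite ?inE ?parent_edge.
Qed.

Lemma nedges_card : nedges e = #|V|.-1.
Proof.
rewrite /nedges edges_parent card_in_imset ?cardsC1 // => x y.
rewrite !inE => x_nroot y_nroot /(eq_set2 (parent_neq y_nroot)) xy_eq.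
apply: label_edge_inj => //.
by case: xy_eq => -[x_eq px_eq]; rewrite px_eq x_eq // addnC.
Qed.

Definition top_label : nat := class_size true + class_size false - 1.

Definition alpha (x : V) : nat := if even_class x then label x else top_label - label x.

Lemma class_size_gt0 side : 0 < class_size side.
Proof.
have nblocks_gt0 : 0 < nblocks.
  by have := odd_double_half r; rewrite /nblocks (negbTE r_even); lia.
apply: leq_trans (leq_prefix_sum _ nblocks_gt0).
by rewrite prefix_sumS prefix_sum0 /side_size; case: side; lia.
Qed.

Lemma alpha_class x : (alpha x <= (class_size true).-1) = even_class x.
Proof.
have := label_lt x; have := class_size_gt0 true; have := class_size_gt0 false.
by rewrite /alpha /top_label; case: (even_class x); lia.
Qed.

Lemma alpha_le x : alpha x <= top_label.
Proof. by have := label_lt x; rewrite /alpha /top_label; case: (even_class x); lia. Qed.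

Lemma alpha_inj : injective alpha.
Proof.
move=> x y alpha_xy.
have class_xy : even_class x = even_class y by rewrite -!alpha_class alpha_xy.
apply: (label_inj class_xy); move: alpha_xy.
have := label_lt x; have := label_lt y; rewrite /alpha /top_label -class_xy.
by case: (even_class x); lia.
Qed.

Lemma alpha_surj n : n <= top_label -> exists x, alpha x = n.
Proof.
have := class_size_gt0 true; have := class_size_gt0 false; rewrite /top_label => ? ? le_n.
case: (ltnP n (class_size true)) => [/label_surj[x class_x label_x] | ge_n].
  by exists x; rewrite /alpha class_x.
have [x class_x label_x] := @label_surj false (top_label - n) (ltac:(rewrite /top_label; lia)).
by exists x; rewrite /alpha class_x label_x /top_label; lia.
Qed.

Lemma card_V : #|V| = top_label.+1.
Proof.
have alpha_uniq : uniq (map alpha (enum V)) by rewrite map_inj_uniq ?enum_uniq //; exact: alpha_inj.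
apply/eqP; rewrite eqn_leq; apply/andP; split.
- have := uniq_leq_size (s2 := iota 0 top_label.+1) alpha_uniq.
  rewrite size_map size_iota -cardE; apply.
  by move=> _ /mapP[x _ ->]; rewrite mem_iota add0n ltnS alpha_le.
- have := uniq_leq_size (s2 := map alpha (enum V)) (iota_uniq 0 top_label.+1).
  rewrite size_map size_iota -cardE; apply.
  move=> n; rewrite mem_iota add0n ltnS => /alpha_surj[x <-].
  by apply: map_f; rewrite mem_enum.
Qed.

Lemma label_edge_lt x : x != v 0 -> label x + label (parent x) < top_label.
Proof.
move=> x_nroot; have := label_lt x; have := label_lt (parent x).
by rewrite even_class_parent // /top_label; case: (even_class x) => /=; lia.
Qed.

Lemma absdiff_alpha_edge x : x != v 0 ->
  absdiff (alpha x) (alpha (parent x)) = top_label - (label x + label (parent x)).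
Proof.
move=> x_nroot; have := label_edge_lt x_nroot.
by rewrite /absdiff /alpha even_class_parent //; case: (even_class x) => /=; lia.
Qed.

Lemma complete_alpha_labeling_alpha : complete_alpha_labeling e alpha (class_size true).-1.
Proof.
have edge_set x y c : (x = c /\ y = parent c) \/ (x = parent c /\ y = c) ->
    [set x; y] = [set c; parent c] /\ absdiff (alpha x) (alpha y) = absdiff (alpha c) (alpha (parent c)).
  by case=> -[-> ->]; rewrite // setUC /absdiff addnC.
have nedges_eq : nedges e = top_label by rewrite nedges_card card_V.
rewrite /complete_alpha_labeling /alpha_labeling nedges_eq; split; last exact: alpha_surj.
split; [exact: alpha_inj | split; [exact: alpha_le | split]].
- move=> x y x' y' /edge_parent[c c_nroot /edge_set[-> ->]].
  move=> /edge_parent[c' c'_nroot /edge_set[-> ->]].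
  rewrite !absdiff_alpha_edge //; have := label_edge_lt c_nroot; have := label_edge_lt c'_nroot.
  by move=> ? ? sum_eq; rewrite (@label_edge_inj c c') //; lia.
- move=> x y /edge_parent[c c_nroot cxy].
  have class_p := even_class_parent c_nroot.
  case: cxy => -[-> ->]; rewrite !ltnNge !alpha_class class_p;
    by case: (even_class c); first [by left | by right].
Qed.

End PairwiseTriviallyBalancedLobster.

Theorem corollary4p14 (V : finType) (e : rel V) :
  pairwise_trivially_balanced_lobster e -> has_complete_alpha_labeling e.
Proof.
case=> _ [r [v [lobe [level [par [[r_gt0 [_ spine_lobe vertex_shape par_shape edgeP]]
  [r_even balanced]]]]]]].
by do 2 eexists; exact: (complete_alpha_labeling_alpha r_gt0 r_even spine_lobe
  vertex_shape par_shape edgeP balanced).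
Qed.
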